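(* Let $S$ be a surface, $\phi:S\to\mathbf{Ein}^{1,1}$ an immersion with $\phi^*\tau$ trivial, $g$ a Lorentz metric on $S$ compatible with the induced split structure, and $(u_t)_{t}$ a smooth family of functions on $S$ with $u_0=0$; set $u=\frac{\mathrm d}{\mathrm dt}\big|_{t=0}u_t$. Let $\sigma_t$ be the isotropic surface associated with $g_t=e^{2u_t}g$ (so that $\sigma_t=e^{u_t}\sigma_0$) and $\eta_t$ its dual isotropic surface; write $\sigma=\sigma_0,\eta=\eta_0$ and dots for $t$-derivatives at $t=0$. Then $$\dot\sigma=u\,\sigma,\qquad \dot\eta=-u\,\eta-\mathrm D_{\nabla^gu}\sigma,$$ where $\nabla^gu$ is the $g$-gradient of $u$, i.e. the vector field with $g(\nabla^gu,\cdot)=\mathrm du$.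
   Context: $W$ is a real $4$-dimensional vector space with a quadratic form of signature $(2,2)$ and polar form $\langle\cdot,\cdot\rangle$; $\mathbf{Ein}^{1,1}\subset\mathbf P(W)$ is the isotropic quadric with tautological line bundle $\tau$ and canonical split structure (fibers of the two projections under a Segre identification with $\mathbf{RP}^1\times\mathbf{RP}^1$). The isotropic surface associated with a compatible metric $h$ is the (unique up to sign) map $\sigma:S\to W$ with $\langle\sigma,\sigma\rangle=0$, $[\sigma]=\phi$, and $h(X,Y)=\langle\mathrm D_X\sigma,\mathrm D_Y\sigma\rangle$. Its dual isotropic surface is the map $\eta$ with $\langle\eta,\sigma\rangle=1$, $\langle\eta,\eta\rangle=0$, $\langle\eta,\mathrm D_X\sigma\rangle=0$ for all tangent $X$. *)

From HB Require Import structures.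
From mathcomp Require Import all_boot all_order all_algebra.
From mathcomp Require Import all_classical all_reals all_analysis.
Set Implicit Arguments. Unset Strict Implicit. Unset Printing Implicit Defensive.
Import Order.TTheory GRing.Theory Num.Theory.
Import numFieldNormedType.Exports.
Local Open Scope ring_scope.
Local Open Scope classical_set_scope.

Definition bil {R : realType} (Q : 'M[R]_4) (x y : 'rV[R]_4) : R :=
  (x *m Q *m y^T) 0 0.

Definition sig22 {R : realType} (Q : 'M[R]_4) : Prop :=
  exists P : 'M[R]_4, P \in unitmx /\
    P *m Q *m P^T = diag_mx (\row_(i < 4) (if (i < 2)%N then 1 else -1)).

Fixpoint iterD {R : realType} {V W : normedModType R} (vs : seq V) (f : V -> W)
  : V -> W :=
  match vs with
  | [::] => f
  | v :: vs' => fun x => 'D_v (iterD vs' f) x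
  end.

Definition smooth_on {R : realType} {V W : normedModType R} (A : set V)
  (f : V -> W) : Prop :=
  forall (vs : seq V) (x : V), A x ->
    {for x, continuous (iterD vs f)} /\ (forall v : V, derivable (iterD vs f) x v).

Definition induced_metric {R : realType} (Q : 'M[R]_4) (sigma : 'rV[R]_2 -> 'rV[R]_4)
  (p X Y : 'rV[R]_2) : R := bil Q ('D_X sigma p) ('D_Y sigma p).

Definition lorentzian {R : realType} (g : 'rV[R]_2 -> 'rV[R]_2 -> R) : Prop :=
  exists e1 e2 : 'rV[R]_2,
    g e1 e1 = 1 /\ g e2 e2 = -1 /\ g e1 e2 = 0 /\ g e2 e1 = 0 /\
    (forall a b : R, a *: e1 + b *: e2 = 0 -> a = 0 /\ b = 0).

Definition dual_at {R : realType} (Q : 'M[R]_4) (sigma : 'rV[R]_2 -> 'rV[R]_4)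
  (e : 'rV[R]_4) (p : 'rV[R]_2) : Prop :=
  bil Q e (sigma p) = 1 /\ bil Q e e = 0 /\
  (forall X : 'rV[R]_2, bil Q e ('D_X sigma p) = 0).

From HB Require Import structures.
From mathcomp Require Import all_boot all_order all_algebra.
From mathcomp Require Import all_classical all_reals all_analysis.
From mathcomp Require Import ring lra.
Import Order.TTheory GRing.Theory Num.Theory.
Import numFieldNormedType.Exports.
Local Open Scope ring_scope.
Local Open Scope classical_set_scope.

(* The dual surface is determined pointwise by the duality conditions.  At a
   point p, let (e1, e2) be g-orthonormal; then (sigma, D_e1 sigma, D_e2 sigma,
   eta_0) is a null frame of W, and the conditions <eta_t, e^(u_t) sigma> = 1,
   <eta_t, D (e^(u_t) sigma)> = 0, <eta_t, eta_t> = 0 force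
     eta_t = e^(-u_t) ((b^2 - a^2)/2 sigma - a D_e1 sigma + b D_e2 sigma + eta_0)
   with a = D_e1 u_t and b = D_e2 u_t.  Differentiating at t = 0, where u_0 = 0
   kills a and b, and exchanging the t- and x-derivatives of u (symmetry of
   mixed partials) gives
     eta' = - u' eta_0 - (D_e1 u') D_e1 sigma + (D_e2 u') D_e2 sigma,
   and expanding D_G sigma in the same frame identifies the last two terms with
   - D_G sigma for the gradient G of u'. *)

Section BilinearForm.
Context {R : realType} (Q : 'M[R]_4).

Lemma bilDl x y z : bil Q (x + y) z = bil Q x z + bil Q y z.
Proof. by rewrite /bil !mulmxDl mxE. Qed.

Lemma bilDr x y z : bil Q x (y + z) = bil Q x y + bil Q x z.
Proof. by rewrite /bil linearD /= mulmxDr mxE. Qed.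

Lemma bilZl (k : R) x y : bil Q (k *: x) y = k * bil Q x y.
Proof. by rewrite /bil -!scalemxAl mxE. Qed.

Lemma bilZr (k : R) x y : bil Q x (k *: y) = k * bil Q x y.
Proof. by rewrite /bil linearZ /= -scalemxAr mxE. Qed.

Lemma bilNl x y : bil Q (- x) y = - bil Q x y.
Proof. by rewrite -scaleN1r bilZl mulN1r. Qed.

Lemma bilNr x y : bil Q x (- y) = - bil Q x y.
Proof. by rewrite -scaleN1r bilZr mulN1r. Qed.

Lemma bilBl x y z : bil Q (x - y) z = bil Q x z - bil Q y z.
Proof. by rewrite bilDl bilNl. Qed.

Lemma bilBr x y z : bil Q x (y - z) = bil Q x y - bil Q x z.
Proof. by rewrite bilDr bilNr. Qed.

Lemma bilC x y : Q^T = Q -> bil Q x y = bil Q y x.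
Proof.
move=> QT; have -> : bil Q x y = (x *m Q *m y^T)^T 0 0 by rewrite mxE.
by rewrite !trmx_mul trmxK QT mulmxA.
Qed.

Lemma bil_row (x : 'rV[R]_4) (M : 'M[R]_4) j :
  (x *m Q *m M^T) 0 j = bil Q x (row j M).
Proof. by rewrite /bil tr_row colE mulmxA -colE !mxE. Qed.

Lemma bil_rows (M N : 'M[R]_4) i j :
  (M *m Q *m N^T) i j = bil Q (row i M) (row j N).
Proof. by rewrite -bil_row -!row_mul [RHS]mxE. Qed.

End BilinearForm.

Lemma sig22_trmx {R : realType} {Q : 'M[R]_4} : sig22 Q -> Q^T = Q.
Proof.
move=> [P [Pu PQP]].
have PQTP : P *m Q^T *m P^T = P *m Q *m P^T.
  have <- : (P *m Q *m P^T)^T = P *m Q^T *m P^T by rewrite !trmx_mul trmxK mulmxA.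
  by rewrite PQP tr_diag_mx.
have PTu : P^T \in unitmx by rewrite unitmx_tr.
have := congr1 (fun M => invmx P *m M *m invmx P^T) PQTP.
by rewrite /= !mulmxA !mulVmx // !mul1mx -!mulmxA !mulmxV // !mulmx1.
Qed.

Definition null_frame {R : realType} (Q : 'M[R]_4) (s a b n : 'rV[R]_4) : Prop :=
  [/\ [/\ bil Q s s = 0, bil Q a a = 1, bil Q b b = -1 & bil Q n n = 0],
      [/\ bil Q s a = 0, bil Q s b = 0 & bil Q s n = 1] &
      [/\ bil Q a b = 0, bil Q a n = 0 & bil Q b n = 0]].

Section NullFrame.
Context {R : realType} {Q : 'M[R]_4} {s a b n : 'rV[R]_4}.
Hypotheses (QT : Q^T = Q) (frame : null_frame Q s a b n).

Lemma null_frame_expand e :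
  e = bil Q e n *: s + bil Q e a *: a - bil Q e b *: b + bil Q e s *: n.
Proof.
have [[ss aa bb nn] [sa sb sn] [ab an bn]] := frame.
have [as' bs ns] : [/\ bil Q a s = 0, bil Q b s = 0 & bil Q n s = 1].
  by split; rewrite bilC.
have [ba na nb] : [/\ bil Q b a = 0, bil Q n a = 0 & bil Q n b = 0].
  by split; rewrite bilC.
pose M : 'M[R]_4 := \matrix_(i < 4) nth 0 [:: s; a; b; n] i.
pose G := M *m Q *m M^T.
(* The Gram matrix of the frame is an involution, so [Q *m M^T *m G] inverts [M]. *)
have GG : G *m G = 1%:M.
{ apply/matrixP => i j; rewrite !mxE !big_ord_recr big_ord0 /=.
  rewrite /G !bil_rows !rowK.
  case: i => [[|[|[|[|i]]]] Hi] //=; case: j => [[|[|[|[|j]]]] Hj] //=.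
  all: rewrite ?ss ?sa ?sb ?sn ?aa ?ab ?an ?bb ?bn ?nn ?as' ?bs ?ns ?ba ?na ?nb.
  all: ring. }
have MinvK : (Q *m M^T *m G) *m M = 1%:M by apply: mulmx1C; rewrite -GG /G !mulmxA.
set w := e - (bil Q e n *: s + bil Q e a *: a - bil Q e b *: b + bil Q e s *: n).
have wQM : w *m Q *m M^T = 0.
{ apply/rowP => j; rewrite bil_row rowK mxE.
  case: j => [[|[|[|[|j]]]] Hj] //=.
  all: rewrite /w !(bilBl, bilDl, bilNl, bilZl).
  all: rewrite ?ss ?sa ?sb ?sn ?aa ?ab ?an ?bb ?bn ?nn ?as' ?bs ?ns ?ba ?na ?nb.
  all: ring. }
apply/eqP; rewrite -subr_eq0 -/w; apply/eqP.
by rewrite -[w]mulmx1 -MinvK !mulmxA wQM !mul0mx.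
Qed.

Lemma null_frame_isotropic (E al be : R) e :
  E != 0 -> bil Q e s = E -> bil Q e a = - (al * E) -> bil Q e b = - (be * E) ->
  bil Q e e = 0 ->
  e = E *: (((be * be - al * al) / 2) *: s - al *: a + be *: b + n).
Proof.
move=> E0 es ea eb ee.
have expand := null_frame_expand e.
(* Isotropy reads 2 <e,n> <e,s> + <e,a>^2 - <e,b>^2 = 0, which fixes <e,n>. *)
have en : bil Q e n = E * ((be * be - al * al) / 2).
  move: ee; rewrite {2}expand !(bilDr, bilNr, bilZr) es ea eb => ee.
  have /eqP : E * (2 * bil Q e n - E * (be * be - al * al)) = 0.
    by rewrite -ee; ring.
  rewrite mulf_eq0 (negbTE E0) subr_eq0 => /eqP en2.
  by rewrite mulrA -en2; field.
rewrite {1}expand en es ea eb !scalerDr !scalerN !scalerA !scaleNr.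
by rewrite opprK [al * E]mulrC [be * E]mulrC.
Qed.

End NullFrame.

Section AffineRestriction.
Context {R : realType} {V' V W : normedModType R}.
Context {F : V -> W} {L : V' -> V} {x' v' : V'} {v : V}.
Hypothesis L_line : forall h : R, L (h *: v' + x') = h *: v + L x'.

Let quotient_precomp :
  (fun h : R => h^-1 *: ((F \o L \o shift x') (h *: v') - (F \o L) x')) =
  (fun h : R => h^-1 *: ((F \o shift (L x')) (h *: v) - F (L x'))).
Proof. by apply: funext => h /=; rewrite L_line. Qed.

Lemma derivable_precomp : derivable (F \o L) x' v' <-> derivable F (L x') v.
Proof. by rewrite /derivable quotient_precomp. Qed.

Lemma derive_precomp : 'D_v' (F \o L) x' = 'D_v F (L x').
Proof. by rewrite /derive quotient_precomp. Qed.

Lemma is_derive_precomp {df : W} :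
  is_derive x' v' (F \o L) df <-> is_derive (L x') v F df.
Proof.
by split=> -[dF <-]; apply: DeriveDef; rewrite ?derive_precomp //;
  apply/derivable_precomp.
Qed.

End AffineRestriction.

Section DirectionalDerivatives.
Context {R : realType} {V W : normedModType R}.

Lemma derivable_cvg_line {f : V -> W} {x v : V} :
  derivable f x v -> (fun h : R => f (h *: v + x)) @ 0^' --> f x.
Proof.
move=> /derivable1P /derivable1_diffP /differentiable_continuous.
by move=> /continuous_withinNx; rewrite scale0r add0r.
Qed.

Lemma is_deriveZ_fun {f : V -> R} {g : V -> W} {x v : V} {df : R} {dg : W} :
  is_derive x v f df -> is_derive x v g dg ->
  is_derive x v (fun y => f y *: g y) (f x *: dg + df *: g x).
Proof.
move=> [fx <-] [gx <-].
have quotientE : (fun h : R =>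
    h^-1 *: (((fun y => f y *: g y) \o shift x) (h *: v) - f x *: g x)) =
  (fun h => f x *: (h^-1 *: (g (h *: v + x) - g x))
            + (h^-1 *: (f (h *: v + x) - f x)) *: g (h *: v + x)).
  apply: funext => h /=.
  have -> : f (h *: v + x) *: g (h *: v + x) - f x *: g x =
      f x *: (g (h *: v + x) - g x) + (f (h *: v + x) - f x) *: g (h *: v + x).
    by rewrite scalerBr scalerBl [RHS]addrC addrA subrK.
  by rewrite scalerDr !scalerA mulrC.
have quotient_cvg : (fun h : R =>
    h^-1 *: (((fun y => f y *: g y) \o shift x) (h *: v) - f x *: g x))
  @ 0^' --> f x *: 'D_v g x + 'D_v f x *: g x.
  rewrite quotientE; apply: cvgD; first exact: cvgZl_tmp gx.
  exact: cvgZ fx (derivable_cvg_line gx).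
by apply: DeriveDef; [apply/cvg_ex; eexists; exact: quotient_cvg | exact: cvg_lim].
Qed.

Lemma is_derive_comp1 {phi : R -> R} {g : V -> R} {x v : V} {dphi dg : R} :
  is_derive (g x) 1 phi dphi -> is_derive x v g dg ->
  is_derive x v (phi \o g) (dphi * dg).
Proof.
pose L := fun h : R => h *: v + x.
have L_line h : L (h *: 1 + 0) = h *: v + L 0.
  by rewrite /L addr0 [h *: 1]mulr1 scale0r add0r.
have L0 : L 0 = x by rewrite /L scale0r add0r.
rewrite -{1 2}L0 => dphi' /(is_derive_precomp L_line) dgL.
have : is_derive (0 : R) 1 ((phi \o g) \o L) (dphi * dg).
  exact: (is_derive1_comp (g := g \o L)).
by rewrite -L0 => /(is_derive_precomp L_line).
Qed.

(* Pointwise forms of [is_deriveD], [is_deriveB] and [is_deriveM], which are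
   stated for the function-ring operations [f + g], [f * g]; their values
   mention [(f * g) x] and the like, which rewriting cannot simplify. *)
Lemma is_deriveD_fun {f g : V -> W} {x v : V} {df dg : W} :
  is_derive x v f df -> is_derive x v g dg -> is_derive x v (fun y => f y + g y) (df + dg).
Proof. exact: is_deriveD. Qed.

Lemma is_deriveB_fun {f g : V -> W} {x v : V} {df dg : W} :
  is_derive x v f df -> is_derive x v g dg -> is_derive x v (fun y => f y - g y) (df - dg).
Proof. exact: is_deriveB. Qed.

Lemma is_deriveM_fun {f g : V -> R} {x v : V} {df dg : R} :
  is_derive x v f df -> is_derive x v g dg ->
  is_derive x v (fun y => f y * g y) (f x * dg + g x * df).
Proof. exact: is_deriveM. Qed.

Lemma is_deriveZl {f : V -> R} {x v : V} {df : R} (w : W) :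
  is_derive x v f df -> is_derive x v (fun y => f y *: w) (df *: w).
Proof.
move=> fdf; have := is_deriveZ_fun fdf (is_derive_cst w x v).
by rewrite scaler0 add0r.
Qed.

End DirectionalDerivatives.

Lemma is_derive_half_sqr_diff0 {R : realType} {V : normedModType R} {f g : V -> R}
    {x v : V} {df dg : R} :
  is_derive x v f df -> is_derive x v g dg -> f x = 0 -> g x = 0 ->
  is_derive x v (fun y => (g y * g y - f y * f y) / 2) 0.
Proof.
move=> fdf gdg f0 g0; apply: is_derive_eq (is_deriveM_fun (is_deriveB_fun
  (is_deriveM_fun gdg gdg) (is_deriveM_fun fdf fdf)) (is_derive_cst (2^-1 : R) x v)) _.
by rewrite f0 g0 !mul0r !addr0 subrr !mulr0 addr0.
Qed.

Section BilinearDerivative.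
Context {R : realType} (Q : 'M[R]_4).

Lemma bilE (x y : 'rV[R]_4) :
  bil Q x y = \sum_(j < 4) (\sum_(i < 4) x 0 i * Q i j) * y 0 j.
Proof. by rewrite /bil !mxE; apply: eq_bigr => j _; rewrite !mxE. Qed.

Lemma bil_cvg {T : Type} {F : set_system T} {FF : Filter F} {f g : T -> 'rV[R]_4}
    {a b : 'rV[R]_4} :
  f @ F --> a -> g @ F --> b -> (fun t => bil Q (f t) (g t)) @ F --> bil Q a b.
Proof.
have coord_cvg (h : T -> 'rV[R]_4) (c : 'rV[R]_4) i :
    h @ F --> c -> (fun t => h t 0 i) @ F --> c 0 i.
  by move=> hc; apply: (cvg_comp h (fun M => M 0 i) hc); exact: coord_continuous.
move=> fa gb; rewrite bilE; under eq_cvg do rewrite bilE.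
apply: cvg_big => //; first exact: add_continuous.
move=> j _; apply: cvgM; last exact: coord_cvg.
apply: cvg_big => //; first exact: add_continuous.
by move=> i _; apply: cvgMr_tmp; exact: coord_cvg.
Qed.

Lemma is_derive_bil {V : normedModType R} {f g : V -> 'rV[R]_4} {x v : V}
    {df dg : 'rV[R]_4} :
  is_derive x v f df -> is_derive x v g dg ->
  is_derive x v (fun y => bil Q (f y) (g y)) (bil Q df (g x) + bil Q (f x) dg).
Proof.
move=> [fx <-] [gx <-].
have quotientE : (fun h : R =>
    h^-1 *: (((fun y => bil Q (f y) (g y)) \o shift x) (h *: v) - bil Q (f x) (g x))) =
  (fun h => bil Q (h^-1 *: (f (h *: v + x) - f x)) (g (h *: v + x))
            + bil Q (f x) (h^-1 *: (g (h *: v + x) - g x))).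
  apply: funext => h /=.
  rewrite bilZl bilZr -mulrDr bilBl bilBr; congr (_ * _).
  by rewrite addrA subrK.
have quotient_cvg : (fun h : R =>
    h^-1 *: (((fun y => bil Q (f y) (g y)) \o shift x) (h *: v) - bil Q (f x) (g x)))
  @ 0^' --> bil Q ('D_v f x) (g x) + bil Q (f x) ('D_v g x).
  rewrite quotientE; apply: cvgD; apply: bil_cvg.
  - exact: fx.
  - exact: derivable_cvg_line gx.
  - exact: cvg_cst.
  - exact: gx.
by apply: DeriveDef; [apply/cvg_ex; eexists; exact: quotient_cvg | exact: cvg_lim].
Qed.

End BilinearDerivative.

Lemma MVT_segment0 {R : realType} (f df : R -> R) (h : R) : 0 <= h ->
  (forall c, 0 <= c <= h -> is_derive c 1 f (df c)) ->
  exists2 c, 0 <= c <= h & f h - f 0 = df c * h.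
Proof.
move=> h0 fdf.
have fdf' c : c \in `[0, h]%R -> is_derive c 1 f (df c) by rewrite in_itv => /fdf.
have [|c cI fhE] := MVT_segment h0 (fun c cI => fdf' c (subset_itv_oo_cc cI)).
- by apply: derivable_within_continuous => c /fdf' [].
- by exists c; [move: cI; rewrite in_itv | rewrite fhE subr0].
Qed.

Lemma is_derive_line {R : realType} {V W : normedModType R} (F : V -> W) (y v : V)
    {c : R} {df : W} :
  is_derive (y + c *: v) v F df -> is_derive c 1 (fun s : R => F (y + s *: v)) df.
Proof.
have L_line (h : R) : y + (h *: 1 + c) *: v = h *: v + (y + c *: v).
  by rewrite [h *: 1]mulr1 scalerDl addrCA addrA.
exact: (is_derive_precomp (F := F) L_line).2.
Qed.

Section Schwarz.
Context {R : realType} {V : normedModType R}.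
Variables (F : V -> R) (x v w : V).

Definition second_difference (h : R) : R :=
  (F (x + h *: w + h *: v) - F (x + h *: v) - (F (x + h *: w) - F x)) / (h * h).

Lemma second_difference_cvg :
  (\forall y \near x, derivable F y v) ->
  (\forall y \near x, derivable ('D_v F) y w) ->
  {for x, continuous ('D_w ('D_v F))} ->
  second_difference @ 0^'+ --> 'D_w ('D_v F) x.
Proof.
(* Two mean value theorems on [0, h] turn the second difference into a value of
   ['D_w ('D_v F)] at a point of the square spanned by [h *: v] and [h *: w]. *)
move=> dF dDF Gc; pose G := 'D_w ('D_v F).
apply/cvgrPdist_lt => e e0.
have near_G : \forall y \near x, `|G x - G y| < e by move/cvgrPdist_lt : Gc; apply.
have [d /= d0 near_x] : nbhs_ball_ (ball_ Num.norm) x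
    (fun y => [/\ derivable F y v, derivable ('D_v F) y w & `|G x - G y| < e]).
  by apply/nbhs_normP; apply: filterS3 dF dDF near_G => y.
pose K := `|v| + `|w| + 1.
have K0 : 0 < K by rewrite /K; have := normr_ge0 v; have := normr_ge0 w; lra.
near=> h.
have h0 : 0 < h by near: h; exact: nbhs_right_gt.
have hK : h * K < d by rewrite -ltr_pdivlMr //; near: h; exact/nbhs_right_lt/divr_gt0.
have near_rect s r : 0 <= s <= h -> 0 <= r <= h ->
    [/\ derivable F (x + s *: v + r *: w) v, derivable ('D_v F) (x + s *: v + r *: w) w
      & `|G x - G (x + s *: v + r *: w)| < e].
  move=> /andP[s0 sh] /andP[r0 rh]; apply: near_x => /=.
  rewrite -addrA opprD addrA subrr add0r normrN (le_lt_trans (ler_normD _ _)) //.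
  rewrite !normrZ !ger0_norm // (le_lt_trans _ hK) // /K.
  have := ler_wpM2r (normr_ge0 v) sh; have := ler_wpM2r (normr_ge0 w) rh; nra.
have hh : 0 <= h <= h by rewrite (ltW h0) lexx.
have h00 : 0 <= (0 : R) <= h by rewrite (ltW h0) lexx.
have [|xi xih first_mvt] := MVT_segment0
  (fun s => F (x + h *: w + s *: v) - F (x + s *: v))
  (fun c => 'D_v F (x + h *: w + c *: v) - 'D_v F (x + c *: v)) _ (ltW h0).
  move=> c ch; apply: is_deriveB; apply: is_derive_line; apply: derivableP.
  - by have [+ _ _] := near_rect c h ch hh; rewrite addrAC.
  - by have [+ _ _] := near_rect c 0 ch h00; rewrite scale0r addr0.
have [|zeta zetah second_mvt] := MVT_segment0
  (fun r => 'D_v F (x + xi *: v + r *: w)) (fun c => G (x + xi *: v + c *: w)) _ (ltW h0).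
  move=> c ch; apply: (is_derive_line ('D_v F) (x + xi *: v) w); apply: derivableP.
  by have [] := near_rect xi c xih ch.
rewrite /second_difference.
have -> : F (x + h *: w + h *: v) - F (x + h *: v) - (F (x + h *: w) - F x) =
    G (x + xi *: v + zeta *: w) * h * h.
  move: first_mvt; rewrite !scale0r !addr0 => ->.
  by rewrite [x + h *: w + xi *: v]addrAC -second_mvt scale0r addr0.
rewrite -mulrA mulfK; last by rewrite mulf_neq0 // gt_eqF.
by have [] := near_rect xi zeta xih zetah.
Unshelve. all: by end_near.
Qed.

End Schwarz.

Lemma derive_comm {R : realType} {V : normedModType R} {A : set V} {F : V -> R}
    {x : V} (v w : V) :
  open A -> A x -> smooth_on A F -> 'D_v ('D_w F) x = 'D_w ('D_v F) x.
Proof.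
move=> oA Ax sF.
have near_A : \forall y \near x, A y by apply: open_nbhs_nbhs.
have dF u : \forall y \near x, derivable F y u.
  by apply: filterS near_A => y Ay; exact: (sF [::] y Ay).2.
have dDF u u' : \forall y \near x, derivable ('D_u F) y u'.
  by apply: filterS near_A => y Ay; exact: (sF [:: u] y Ay).2.
have Gc u u' : {for x, continuous ('D_u' ('D_u F))} := (sF [:: u'; u] x Ax).1.
have sym : second_difference F x w v = second_difference F x v w.
  apply: funext => h; rewrite /second_difference [x + h *: v + h *: w]addrAC.
  by congr (_ / _); ring.
have := second_difference_cvg F x w v (dF w) (dDF w v) (Gc w v); rewrite sym => cvg_vw.
exact: cvg_unique cvg_vw (second_difference_cvg F x v w (dF v) (dDF v w) (Gc v w)).
Qed.

Lemma isotropic_derive_orth {R : realType} {Q : 'M[R]_4} {V : normedModType R}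
    {sigma : V -> 'rV[R]_4} {x X : V} :
  Q^T = Q -> (\forall y \near x, bil Q (sigma y) (sigma y) = 0) ->
  derivable sigma x X -> bil Q (sigma x) ('D_X sigma x) = 0.
Proof.
move=> QT iso dsigma.
have dbil := is_derive_bil Q (derivableP dsigma) (derivableP dsigma).
have : 'D_X (fun y => bil Q (sigma y) (sigma y)) x = 0.
  by rewrite (near_eq_derive _ iso) derive_cst.
rewrite derive_val (bilC _ _ _ QT) => /eqP.
by rewrite -mulr2n mulrn_eq0 => /eqP.
Qed.

Lemma dual_at_conformal {R : realType} {Q : 'M[R]_4} {phi : 'rV[R]_2 -> R}
    {sigma : 'rV[R]_2 -> 'rV[R]_4} {e : 'rV[R]_4} {p : 'rV[R]_2} :
  dual_at Q (fun x => expR (phi x) *: sigma x) e p ->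
  (forall X, derivable phi p X) -> (forall X, derivable sigma p X) ->
  [/\ bil Q e (sigma p) = expR (- phi p),
      forall X, bil Q e ('D_X sigma p) = - ('D_X phi p * expR (- phi p))
    & bil Q e e = 0].
Proof.
move=> [es [ee eD]] dphi dsigma; rewrite expRN.
have E0 : expR (phi p) != 0 by rewrite gt_eqF ?expR_gt0.
have es' : bil Q e (sigma p) = (expR (phi p))^-1.
  by apply: (mulfI E0); rewrite -bilZr es mulfV.
split; [done | move=> X | done].
have dexp := is_derive_comp1 (is_derive_expR (phi p)) (derivableP (dphi X)).
have dprod := is_deriveZ_fun dexp (derivableP (dsigma X)).
have := eD X; rewrite derive_val bilDr !bilZr es' /= mulrAC mulfV // mul1r.
move=> /eqP; rewrite addr_eq0 => /eqP eDX.
by apply: (mulfI E0); rewrite eDX; field.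
Qed.

Section ConformalVariation.
Context {R : realType} {Q : 'M[R]_4} {U : set 'rV[R]_2} {T : set R}.
Context {sigma : 'rV[R]_2 -> 'rV[R]_4} {u : R -> 'rV[R]_2 -> R}.
Context {eta : R -> 'rV[R]_2 -> 'rV[R]_4}.
Hypotheses (QT : Q^T = Q) (oU : open U) (oT : open T) (T0 : T 0).
Hypothesis sigma_smooth : smooth_on U sigma.
Hypothesis sigma_isotropic : forall p, U p -> bil Q (sigma p) (sigma p) = 0.
Hypothesis u_smooth : smooth_on (T `*` U) (fun q : R * 'rV[R]_2 => u q.1 q.2).
Hypothesis u0 : forall p, U p -> u 0 p = 0.
Hypothesis eta_dual : forall t p, T t -> U p ->
  dual_at Q (fun x => expR (u t x) *: sigma x) (eta t p) p.

Let time_line (x : 'rV[R]_2) (t h : R) :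
  (fun s : R => (s, x)) (h *: 1 + t) = h *: ((1 : R), (0 : 'rV[R]_2)) + (t, x).
Proof. by apply: injective_projections; rewrite /= ?scaler0 ?add0r. Qed.

Let space_line (t : R) (x X : 'rV[R]_2) (h : R) :
  (fun y => (t, y)) (h *: X + x) = h *: ((0 : R), X) + (t, x).
Proof. by apply: injective_projections; rewrite /= ?scaler0 ?add0r. Qed.

Lemma derive_time (G : R * 'rV[R]_2 -> R) t x :
  'D_1 (fun s => G (s, x)) t = 'D_(1, 0) G (t, x).
Proof. exact: derive_precomp (time_line x t). Qed.

Lemma derive_space (G : R * 'rV[R]_2 -> R) t x X :
  'D_X (fun y => G (t, y)) x = 'D_(0, X) G (t, x).
Proof. exact: derive_precomp (space_line t x X). Qed.

Lemma derivable_time (G : R * 'rV[R]_2 -> R) t x :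
  derivable G (t, x) (1, 0) -> derivable (fun s => G (s, x)) t 1.
Proof. exact: (derivable_precomp (time_line x t)).2. Qed.

Lemma derivable_space (G : R * 'rV[R]_2 -> R) t x X :
  derivable G (t, x) (0, X) -> derivable (fun y => G (t, y)) x X.
Proof. exact: (derivable_precomp (space_line t x X)).2. Qed.

Lemma derivable_u_time {t x} : T t -> U x -> derivable (fun s => u s x) t 1.
Proof. by move=> Tt Ux; apply: (derivable_time (fun q => u q.1 q.2)); exact: (u_smooth [::] (t, x) (conj Tt Ux)).2. Qed.

Lemma derivable_u_space {t x X} : T t -> U x -> derivable (u t) x X.
Proof. by move=> Tt Ux; apply: (derivable_space (fun q => u q.1 q.2)); exact: (u_smooth [::] (t, x) (conj Tt Ux)).2. Qed.

Lemma derive_u0 p X : U p -> 'D_X (u 0) p = 0.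
Proof.
move=> Up; rewrite -[RHS](derive_cst 0 p X); apply: near_eq_derive.
by apply: filterS (open_nbhs_nbhs (conj oU Up)) => x /u0.
Qed.

Lemma is_derive_mixed p X : U p ->
  is_derive (0 : R) 1 (fun t => 'D_X (u t) p) ('D_X (fun x => 'D_1 (fun t => u t x) 0) p).
Proof.
move=> Up; pose Uf := fun q : R * 'rV[R]_2 => u q.1 q.2.
have TUp : (T `*` U) (0, p) by [].
have open_TU : open (T `*` U).
  rewrite openE => -[t x] [/= Tt Ux].
  by exists (T, U) => //=; split; exact: open_nbhs_nbhs.
have -> : (fun t => 'D_X (u t) p) = (fun t => 'D_(0, X) Uf (t, p)).
  by apply: funext => t; exact: (derive_space Uf t p X).
have -> : (fun x => 'D_1 (fun t => u t x) 0) = (fun x => 'D_(1, 0) Uf (0, x)).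
  by apply: funext => x; exact: (derive_time Uf 0 x).
rewrite (derive_space ('D_(1, 0) Uf)) (derive_comm ((0 : R), X) ((1 : R), (0 : 'rV[R]_2)) open_TU TUp u_smooth).
rewrite -derive_time; apply/derivableP/(derivable_time ('D_(0, X) Uf)).
exact: (u_smooth [:: (0, X)] (0, p) TUp).2.
Qed.

Lemma dual_at_u {t p} : T t -> U p ->
  [/\ bil Q (eta t p) (sigma p) = expR (- u t p),
      forall X, bil Q (eta t p) ('D_X sigma p) = - ('D_X (u t) p * expR (- u t p))
    & bil Q (eta t p) (eta t p) = 0].
Proof.
move=> Tt Up; apply: (dual_at_conformal (eta_dual _ _ Tt Up)) => X.
- exact: derivable_u_space Tt Up.
- exact: (sigma_smooth [::] p Up).2.
Qed.

Lemma is_derive_conformal_sigma p : U p ->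
  is_derive (0 : R) 1 (fun t => expR (u t p) *: sigma p) ('D_1 (fun t => u t p) 0 *: sigma p).
Proof.
move=> Up.
have := is_deriveZl (sigma p)
  (is_derive_comp1 (is_derive_expR _) (derivableP (derivable_u_time T0 Up))).
by rewrite u0 // expR0 mul1r.
Qed.

Section OrthonormalFrame.
Context {p e1 e2 : 'rV[R]_2}.
Hypothesis Up : U p.
Hypotheses (h11 : induced_metric Q sigma p e1 e1 = 1)
  (h22 : induced_metric Q sigma p e2 e2 = -1) (h12 : induced_metric Q sigma p e1 e2 = 0).

Lemma sigma_derive_orth X : bil Q (sigma p) ('D_X sigma p) = 0.
Proof.
apply: isotropic_derive_orth QT _ ((sigma_smooth [::] p Up).2 X).
by apply: filterS (open_nbhs_nbhs (conj oU Up)) => x /sigma_isotropic.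
Qed.

Lemma eta0_derive_orth X : bil Q (eta 0 p) ('D_X sigma p) = 0.
Proof. by have [_ -> _] := dual_at_u T0 Up; rewrite derive_u0 // mul0r oppr0. Qed.

Lemma null_frame_at : null_frame Q (sigma p) ('D_e1 sigma p) ('D_e2 sigma p) (eta 0 p).
Proof.
have [eta0_sigma _ eta0_iso] := dual_at_u T0 Up.
rewrite (u0 p Up) oppr0 expR0 in eta0_sigma.
split; split; [exact: sigma_isotropic | exact: h11 | exact: h22 | exact: eta0_iso
  | exact: sigma_derive_orth | exact: sigma_derive_orth | | exact: h12 | |].
- by rewrite (bilC _ _ _ QT).
- by rewrite (bilC _ _ _ QT) eta0_derive_orth.
- by rewrite (bilC _ _ _ QT) eta0_derive_orth.
Qed.

Lemma eta_closed_form t : T t ->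
  let a := 'D_e1 (u t) p in let b := 'D_e2 (u t) p in
  eta t p = expR (- u t p) *: (((b * b - a * a) / 2) *: sigma p
             - a *: 'D_e1 sigma p + b *: 'D_e2 sigma p + eta 0 p).
Proof.
move=> Tt a b; have [eta_sigma eta_D eta_iso] := dual_at_u Tt Up.
apply: (null_frame_isotropic QT null_frame_at) => //; first by rewrite gt_eqF ?expR_gt0.
Qed.

Lemma derive_sigma_gradient G :
  (forall Y, induced_metric Q sigma p G Y = 'D_Y (fun x => 'D_1 (fun t => u t x) 0) p) ->
  'D_G sigma p = 'D_e1 (fun x => 'D_1 (fun t => u t x) 0) p *: 'D_e1 sigma p
                 - 'D_e2 (fun x => 'D_1 (fun t => u t x) 0) p *: 'D_e2 sigma p.
Proof.
move=> grad; rewrite [LHS](null_frame_expand QT null_frame_at) -!grad.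
rewrite (bilC _ _ (eta 0 p) QT) eta0_derive_orth (bilC _ _ (sigma p) QT).
by rewrite sigma_derive_orth !scale0r add0r addr0.
Qed.

Lemma is_derive_eta G :
  (forall Y, induced_metric Q sigma p G Y = 'D_Y (fun x => 'D_1 (fun t => u t x) 0) p) ->
  is_derive (0 : R) 1 (fun t => eta t p)
    (- ('D_1 (fun t => u t p) 0 *: eta 0 p) - 'D_G sigma p).
Proof.
move=> grad; pose a t := 'D_e1 (u t) p; pose b t := 'D_e2 (u t) p.
pose g t := ((b t * b t - a t * a t) / 2) *: sigma p
  - a t *: 'D_e1 sigma p + b t *: 'D_e2 sigma p + eta 0 p.
apply: (near_eq_is_derive (f := fun t => expR (- u t p) *: g t)).
  by apply: filterS (open_nbhs_nbhs (conj oT T0)) => t /eta_closed_form ->.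
have a0 : a 0 = 0 by exact: derive_u0.
have b0 : b 0 = 0 by exact: derive_u0.
have dE : is_derive (0 : R) 1 (fun t => expR (- u t p)) (- 'D_1 (fun t => u t p) 0).
  have := is_derive_comp1 (g := fun t => - u t p) (is_derive_expR _)
    (is_deriveN (derivableP (derivable_u_time T0 Up))).
  by rewrite /= (u0 p Up) oppr0 expR0 mul1r.
have da := is_derive_mixed p e1 Up; have db := is_derive_mixed p e2 Up.
have dcoef : is_derive (0 : R) 1 (fun t => (b t * b t - a t * a t) / 2) 0.
  exact: is_derive_half_sqr_diff0 da db a0 b0.
have dg := is_deriveD_fun (is_deriveD_fun (is_deriveB_fun (is_deriveZl (sigma p) dcoef)
  (is_deriveZl ('D_e1 sigma p) da)) (is_deriveZl ('D_e2 sigma p) db))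
  (is_derive_cst (eta 0 p) (0 : R) 1).
apply: is_derive_eq (is_deriveZ_fun dE dg) _.
rewrite (derive_sigma_gradient G grad) (u0 p Up) (derive_u0 p e1 Up) (derive_u0 p e2 Up).
rewrite a0 b0 oppr0 expR0 scale1r mul0r subrr mul0r !scale0r.
by rewrite sub0r subrr !add0r addr0 scaleNr opprB [RHS]addrC [- _ + _]addrC.
Qed.

End OrthonormalFrame.

End ConformalVariation.
Theorem mainTheorem18 (R : realType) (Q : 'M[R]_4) (U : set 'rV[R]_2)
  (T : set R) (sigma : 'rV[R]_2 -> 'rV[R]_4) (u : R -> 'rV[R]_2 -> R)
  (eta : R -> 'rV[R]_2 -> 'rV[R]_4) :
  sig22 Q ->
  open U -> open T -> T 0 ->
  smooth_on U sigma ->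
  (forall p, U p -> bil Q (sigma p) (sigma p) = 0) ->
  (forall p, U p -> lorentzian (induced_metric Q sigma p)) ->
  smooth_on (T `*` U) (fun q : R * 'rV[R]_2 => u q.1 q.2) ->
  (forall p, U p -> u 0 p = 0) ->
  (forall t p, T t -> U p ->
     dual_at Q (fun x => expR (u t x) *: sigma x) (eta t p) p) ->
  let udot : 'rV[R]_2 -> R := fun p => 'D_1 (fun t => u t p) 0 in
  forall p, U p ->
    is_derive (0:R) (1:R) (fun t => expR (u t p) *: sigma p) (udot p *: sigma p) /\
    (forall G : 'rV[R]_2,
       (forall Y : 'rV[R]_2, induced_metric Q sigma p G Y = 'D_Y udot p) ->
       is_derive (0:R) (1:R) (fun t => eta t p) (- (udot p *: eta 0 p) - 'D_G sigma p)).
Proof.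
move=> sQ oU oT T0 sigma_smooth sigma_iso lor u_smooth u0 eta_dual udot p Up.
have QT := sig22_trmx sQ.
split; first exact: (is_derive_conformal_sigma T0 u_smooth u0 p Up).
move=> G grad; have [e1 [e2 [h11 [h22 [h12 _]]]]] := lor p Up.
exact: (is_derive_eta QT oU oT T0 sigma_smooth sigma_iso u_smooth u0 eta_dual Up h11 h22 h12 G grad).
Qed.
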